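(* Let $\mathbf{L}\in\mathbb{R}^{N_1\times N_2}$ satisfy Assumption 1 with $n$ clusters of sizes $n_1,\dots,n_n$, and suppose $\operatorname{rank}(\mathbf{L})=r$. Assume $r/n\ge 18\log\max_i n_i$ and $n_i\ge 96\,\frac{r}{n}\log n_i$ for all $1\le i\le n$. Then $$\mathbb{P}\left[\mu_v<\frac{1}{n}\cdot\frac{0.5\,N_2}{\min_i n_i}\right]\le 2\sum_{i=1}^n n_i^{-5},$$ where $\mu_v$ is the row-space incoherence parameter of $\mathbf{L}$.
   Context: Assumption 1: $\mathbf{L}=[\mathbf{U}_1\mathbf{Q}_1\ \cdots\ \mathbf{U}_n\mathbf{Q}_n]$, where for each $i$, $\mathbf{U}_i\in\mathbb{R}^{N_1\times r/n}$ has column space a uniformly random $r/n$-dimensional subspace of $\mathbb{R}^{N_1}$, and $\mathbf{Q}_i\in\mathbb{R}^{r/n\times n_i}$ has row space a uniformly random $r/n$-dimensional subspace of $\mathbb{R}^{n_i}$ (all drawn independently), with $\sum_{i=1}^n n_i=N_2$ and $\min_i n_i$ much larger than $r/n$. The compact SVD of $\mathbf{L}$ is $\mathbf{U}\boldsymbol{\Sigma}\mathbf{V}^T$ with $\mathbf{V}\in\mathbb{R}^{N_2\times r}$; $\mathbf{e}_i$ is the $i$-th standard basis vector of $\mathbb{R}^{N_2}$; the row-space incoherence parameter $\mu_v$ is the smallest constant such that $\max_{1\le i\le N_2}\|\mathbf{e}_i^T\mathbf{V}\|_2^2\le\mu_v r/N_2$. *)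

From HB Require Import structures.
From mathcomp Require Import all_boot all_order all_algebra.
From mathcomp Require Import all_classical all_reals all_analysis.
Set Implicit Arguments. Unset Strict Implicit. Unset Printing Implicit Defensive.
Import Order.TTheory GRing.Theory Num.Theory.
Local Open Scope ring_scope.
Local Open Scope classical_set_scope.

Section Defs.
Context {R : realType} {d : measure_display} {T : measurableType d}.
Variable (P : probability T R).

Definition rowproj (a b : nat) (X : 'M[R]_(a, b)) : 'M[R]_b :=
  X^T *m invmx (X *m X^T) *m X.

Definition mx_event (m n : nat) (X : T -> 'M[R]_(m, n))
  (B : 'I_m -> 'I_n -> set R) : set T :=
  [set w | forall (a : 'I_m) (b : 'I_n), B a b (X w a b)].

Definition rand_mx (m n : nat) (X : T -> 'M[R]_(m, n)) : Prop :=
  forall (a : 'I_m) (b : 'I_n), measurable_fun setT (fun w => X w a b).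

(* The row space of X is a uniformly random a-dimensional subspace of R^b:
   X has rank a almost surely, and the law of the orthogonal projector onto
   its row space (which determines the subspace) is invariant under every
   orthogonal change of coordinates O (row space of X O is (row space X) O),
   i.e. it is the O(b)-invariant (= uniform) distribution on the Grassmannian.
   Laws on 'M_b are compared on measurable rectangles (a pi-system generating
   the Borel sigma-algebra). *)
Definition unif_rowspace (a b : nat) (X : T -> 'M[R]_(a, b)) : Prop :=
  P [set w | \rank (X w) != a] = 0%E /\
  forall O : 'M[R]_b, O^T *m O = 1%:M ->
  forall B : 'I_b -> 'I_b -> set R, (forall j k, measurable (B j k)) ->
    P (mx_event (fun w => rowproj (X w)) B) =
    P (mx_event (fun w => O^T *m rowproj (X w) *m O) B).

Definition indep_mx (I : finType) (m n : I -> nat)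
  (X : forall i, T -> 'M[R]_(m i, n i)) : Prop :=
  forall B : forall i, 'I_(m i) -> 'I_(n i) -> set R,
    (forall i a b, measurable (B i a b)) ->
  forall J : {set I},
    P (\big[setI/setT]_(i in J) mx_event (X i) (B i)) =
    (\prod_(i in J) P (mx_event (X i) (B i)))%E.

End Defs.

(* The family (U_1,...,U_n,Q_1,...,Q_n) indexed by 'I_n + 'I_n. *)
Definition UQdim1 (n N1 k : nat) (nn : 'I_n -> nat) (s : 'I_n + 'I_n) : nat :=
  match s with inl _ => N1 | inr _ => k end.
Definition UQdim2 (n N1 k : nat) (nn : 'I_n -> nat) (s : 'I_n + 'I_n) : nat :=
  match s with inl _ => k | inr i => nn i end.
Definition UQfam {R : realType} {T : Type} (n N1 k : nat) (nn : 'I_n -> nat)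
  (U : 'I_n -> T -> 'M[R]_(N1, k)) (Q : forall i, T -> 'M[R]_(k, nn i))
  (s : 'I_n + 'I_n) : T -> 'M[R]_(UQdim1 N1 k nn s, UQdim2 N1 k nn s) :=
  match s return T -> 'M[R]_(UQdim1 N1 k nn s, UQdim2 N1 k nn s) with
  | inl i => U i | inr i => Q i end.

Definition clusterL {R : realType} (n N1 k : nat) (nn : 'I_n -> nat)
  (U : 'I_n -> 'M[R]_(N1, k)) (Q : forall i, 'M[R]_(k, nn i))
  : 'M[R]_(N1, \sum_(i < n) nn i) :=
  mxrow (fun i => U i *m Q i).

(* V has orthonormal columns spanning the row space of L (the V factor of a
   compact SVD L = U Sigma V^T). *)
Definition is_rowV {R : realType} (m N : nat) (L : 'M[R]_(m, N))
  (V : 'M[R]_(N, \rank L)) : Prop :=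
  V^T *m V = 1%:M /\ (V^T == L)%MS.
Arguments is_rowV {R m N} L V.

Definition rowV {R : realType} (m N : nat) (L : 'M[R]_(m, N))
  : 'M[R]_(N, \rank L) :=
  match boolp.pselect (exists V : 'M[R]_(N, \rank L), is_rowV L V) with
  | left h => projT1 (boolp.cid h)
  | right _ => 0
  end.

(* Row-space incoherence: smallest mu with max_i ||e_i^T V||^2 <= mu r / N2,
   i.e. mu_v = (N2 / r) * max_i ||e_i^T V||^2, with r = rank L. *)
Definition mu_v {R : realType} (m N : nat) (L : 'M[R]_(m, N)) : R :=
  (N%:R / (\rank L)%:R) *
  \big[Num.max/0]_(i < N) \sum_(j < \rank L) (rowV L i j) ^+ 2.

From HB Require Import structures.
From mathcomp Require Import all_boot all_order all_algebra.
From mathcomp Require Import all_classical all_reals all_analysis.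
From mathcomp Require Import measurable_realfun ring lra.
Import Order.TTheory GRing.Theory Num.Theory.
Local Open Scope ring_scope.

Set Implicit Arguments. Unset Strict Implicit. Unset Printing Implicit Defensive.

(* The bound holds surely, not merely with high probability.  Factor
   L = [U_1 ... U_n] * diag(Q_1, ..., Q_n); when rank L = n k the block-diagonal
   factor has full row rank and the same row space as L, so the orthogonal
   projector V V^T onto the row space of L is diag(P_1, ..., P_n), P_i being the
   projector onto the row space of Q_i.  P_i has trace k on n_i diagonal entries,
   so some ||e_j^T V||^2 >= k / n_i and mu_v >= N2 / (n min_i n_i).  The event is
   thus contained in the null event rank L <> n k.  What remains is measurability:
   on each of the finitely many events "the rows f of L form a row basis of L",
   mu_v is a rational function of the entries of L. *)

Section GramMatrix.
Variable R : realFieldType.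

Lemma mulmx_tr_eq0 m n (X : 'M[R]_(m, n)) : X *m X^T = 0 -> X = 0.
Proof.
move=> XX0; apply/matrixP => a b; rewrite mxE.
have /eqP : (X *m X^T) a a = 0 by rewrite XX0 mxE.
rewrite mxE psumr_eq0 => [/allP/(_ b (mem_index_enum _))|j _]; rewrite mxE -expr2.
  by rewrite sqrf_eq0 => /eqP.
exact: sqr_ge0.
Qed.

Lemma row_free_gram_unit m n (X : 'M[R]_(m, n)) :
  row_free X -> X *m X^T \in unitmx.
Proof.
move=> fX; rewrite -row_free_unit; apply/inj_row_free => v vXX0.
have /mulmx_tr_eq0/eqP : v *m X *m (v *m X)^T = 0.
  by rewrite trmx_mul !mulmxA -(mulmxA v) vXX0 mul0mx.
by rewrite mulmx_free_eq0 // => /eqP.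
Qed.

End GramMatrix.

Section OrthonormalBasis.
Variable R : rcfType.

Lemma normalize_row n (z : 'rV[R]_n) :
  z != 0 -> exists2 c : R, c != 0 & (c *: z) *m (c *: z)^T = 1%:M.
Proof.
move=> z0; set s := (z *m z^T) 0 0.
have s_gt0 : 0 < s.
  have s_ge0 : 0 <= s by rewrite /s mxE sumr_ge0 // => j _; rewrite mxE -expr2 sqr_ge0.
  rewrite lt0r s_ge0 andbT; apply: contra z0 => s0; apply/eqP/mulmx_tr_eq0.
  by apply/matrixP => i j; rewrite !ord1 [RHS]mxE; exact/eqP.
exists (Num.sqrt s)^-1; first by rewrite invr_eq0 sqrtr_eq0 -ltNge.
rewrite linearZ -scalemxAl -scalemxAr [z *m z^T]mx11_scalar -/s scalerA.
by rewrite -invfM -expr2 sqr_sqrtr ?ltW // -scalemx1 scalerA mulVf ?gt_eqF ?scale1r.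
Qed.

Lemma orthonormal_col_mx m n (e : 'rV[R]_n) (Y : 'M[R]_(m, n)) :
  e *m e^T = 1%:M -> e *m Y^T = 0 -> Y *m Y^T = 1%:M ->
  col_mx e Y *m (col_mx e Y)^T = 1%:M.
Proof.
move=> ee eY YY; rewrite tr_col_mx mul_col_row ee eY YY.
by rewrite -[Y *m e^T]trmxK trmx_mul trmxK eY trmx0 -scalar_mx_block.
Qed.

Lemma orthonormal_row_basis m n (X : 'M[R]_(m, n)) :
  row_free X -> exists2 Y : 'M[R]_(m, n), Y *m Y^T = 1%:M & (Y == X)%MS.
Proof.
elim: m X => [|m IH] X fX.
  by exists X; [apply/matrixP => -[] | apply/eqmxP].
move: X fX; change (forall X : 'M[R]_(1 + m, n), row_free X ->
  exists2 Y : 'M[R]_(1 + m, n), Y *m Y^T = 1%:M & (Y == X)%MS) => X fX.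
rewrite -[X]vsubmxK in fX *; set x : 'rV_n := usubmx X; set X' := dsubmx X.
have rkX : \rank (col_mx x X') = m.+1 by exact/eqP.
have rk_le : (\rank (col_mx x X') <= 1 + \rank X')%N.
  rewrite -addsmxE; apply: leq_trans (mxrank_adds_leqif x X').1 _.
  by rewrite leq_add2r rank_leq_row.
have fX' : row_free X'.
  by rewrite /row_free eqn_leq rank_leq_row; move: rk_le; rewrite rkX add1n.
have [Y' Y'Y' eY'] := IH X' fX'.
set z := x - x *m Y'^T *m Y'.
have zY' : z *m Y'^T = 0 by rewrite mulmxBl -!mulmxA Y'Y' mulmx1 subrr.
have x_Y' : (x *m Y'^T *m Y' <= Y')%MS by exact: submxMl.
have z0 : z != 0.
  apply/eqP => z_0.
  have xX' : (x <= X')%MS.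
    by rewrite -(eqmxP eY') -[x](subrK (x *m Y'^T *m Y')) -/z z_0 add0r.
  suff : (\rank (col_mx x X') <= m)%N by rewrite rkX ltnn.
  by rewrite -addsmxE (addsmx_idPr xX') rank_leq_row.
have [c c0 ee] := normalize_row z0.
exists (col_mx (c *: z) Y').
  by apply: orthonormal_col_mx; rewrite // -scalemxAl zY' scaler0.
have sY'x : (x *m Y'^T *m Y' <= x + Y')%MS := submx_trans x_Y' (addsmxSr _ _).
have sY'z : (x *m Y'^T *m Y' <= z + Y')%MS := submx_trans x_Y' (addsmxSr _ _).
have zY'_xY' : (z + Y' :=: x + Y')%MS.
  apply/eqmxP/andP; split; rewrite addsmx_sub addsmxSr andbT.
    by rewrite addmx_sub ?addsmxSl // (eqmx_opp _) sY'x.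
  by rewrite -[x](subrK (x *m Y'^T *m Y')) -/z addmx_sub ?addsmxSl ?sY'z.
apply/eqmxP; apply: eqmx_trans (eqmx_sym (addsmxE _ _)) _.
apply: eqmx_trans (adds_eqmx (eqmx_scale z c0) (eqmx_refl Y')) _.
apply: eqmx_trans zY'_xY' (eqmx_trans (adds_eqmx (eqmx_refl x) (eqmxP eY')) _).
exact: addsmxE.
Qed.
End OrthonormalBasis.

Section RowProjector.
Variable R : realType.

Lemma mulmx_rowproj m n (X : 'M[R]_(m, n)) : row_free X -> X *m rowproj X = X.
Proof. by move=> fX; rewrite /rowproj !mulmxA mulmxV ?mul1mx ?row_free_gram_unit. Qed.

Lemma trmx_rowproj m n (X : 'M[R]_(m, n)) : (rowproj X)^T = rowproj X.
Proof. by rewrite /rowproj !trmx_mul trmxK trmx_inv trmx_mul trmxK mulmxA. Qed.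

Lemma rowproj_sub m n (X : 'M[R]_(m, n)) : (rowproj X <= X)%MS.
Proof. exact: submxMl. Qed.

Lemma mxtrace_rowproj m n (X : 'M[R]_(m, n)) : row_free X -> \tr (rowproj X) = m%:R.
Proof.
by move=> fX; rewrite /rowproj mxtrace_mulC mulmxA mulmxV ?mxtrace1 ?row_free_gram_unit.
Qed.

Lemma rowV_spec m N (L : 'M[R]_(m, N)) : is_rowV L (rowV L).
Proof.
rewrite /rowV; case: boolp.pselect => [h|[]]; first exact: projT2 (boolp.cid h).
have [Y YY eY] := orthonormal_row_basis (row_base_free L).
exists Y^T; rewrite /is_rowV trmxK; split => //.
exact/eqmxP/(eqmx_trans (eqmxP eY) (eq_row_base L)).
Qed.

Section Projector.
Variables (m N : nat) (L : 'M[R]_(m, N)) (M : 'M[R]_N).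
Hypotheses (ML : (M <= L)%MS) (LM : L *m M = L) (Msym : M^T = M).

Lemma rowV_mulmx_tr : rowV L *m (rowV L)^T = M.
Proof.
have [VV /andP[/submxP[C eC] sLV]] := rowV_spec L.
have [A eA] := submxP (submx_trans ML sLV).
have VM : (rowV L)^T *m M = (rowV L)^T by rewrite eC -mulmxA LM.
have MV : M *m rowV L = rowV L by rewrite -Msym -[RHS]trmxK -VM trmx_mul trmxK.
by rewrite eA; congr (_ *m _); rewrite -MV eA -mulmxA VV mulmx1.
Qed.

Lemma mu_v_projector :
  mu_v L = N%:R / (\rank L)%:R * \big[Num.max/0]_(i < N) M i i.
Proof.
rewrite /mu_v -rowV_mulmx_tr; congr (_ * _); apply: eq_bigr => i _.
by rewrite mxE; apply: eq_bigr => j _; rewrite mxE expr2.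
Qed.

End Projector.

Lemma mu_v_rowproj m p N (L : 'M[R]_(m, N)) (X : 'M[R]_(p, N)) :
  row_free X -> (X == L)%MS ->
  mu_v L = N%:R / (\rank L)%:R * \big[Num.max/0]_(i < N) rowproj X i i.
Proof.
move=> fX /andP[XL /submxP[D eL]].
apply: mu_v_projector; last exact: trmx_rowproj.
- exact: submx_trans (rowproj_sub X) XL.
- by rewrite eL -mulmxA mulmx_rowproj.
Qed.

End RowProjector.

Section ClusterProjector.
Import tagnat.
Variables (R : realType) (N1 n k : nat) (nn : 'I_n -> nat).
Variables (U : 'I_n -> 'M[R]_(N1, k)) (Q : forall i, 'M[R]_(k, nn i)).

Let N2 := (\sum_(i < n) nn i)%N.
Let L := clusterL U Q.

(* [conform_mx] casts the diagonal blocks, whose two indices are only propositionally equal. *)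
Let Qdiag : 'M[R]_(\sum_(i < n) k, N2) :=
  \mxblock_(i, j) (if i == j then conform_mx 0 (Q i) else 0).
Let Pdiag : 'M[R]_N2 := \mxdiag_(i < n) rowproj (Q i).

Lemma mulmx_Qdiag p (A : forall i, 'M[R]_(p, k)) :
  \mxrow_(i < n) A i *m Qdiag = \mxrow_(j < n) (A j *m Q j).
Proof.
rewrite mul_mxrow_mxblock; apply: eq_mxrow => j.
rewrite (bigD1 j) //= eqxx conform_mx_id big1 ?addr0 // => i /negPf ->.
by rewrite mulmx0.
Qed.

Lemma Pdiag_sub_Qdiag : (Pdiag <= Qdiag)%MS.
Proof.
apply/submxP; exists (\mxblock_(i, j)
  (if i == j then conform_mx 0 ((Q i)^T *m invmx (Q i *m (Q i)^T)) else 0)).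
rewrite /Pdiag /mxdiag mul_mxblock; apply: eq_mxblock => i l.
rewrite (bigD1 i) //= eqxx conform_mx_id big1 ?addr0; last first.
  by move=> j /negPf; rewrite eq_sym => ->; rewrite mul0mx.
by case: eqVneq => [<-|_]; rewrite ?mulmx0 // !conform_mx_id.
Qed.

Hypothesis rankL : \rank L = (n * k)%N.

Lemma row_free_Qdiag : row_free Qdiag.
Proof.
rewrite /row_free eqn_leq rank_leq_row /=.
apply: leq_trans (mxrankM_maxr (\mxrow_i U i) Qdiag).
by rewrite mulmx_Qdiag -/(clusterL U Q) -/L rankL sum_nat_const card_ord.
Qed.

Lemma Qdiag_sub : (Qdiag <= L)%MS.
Proof.
have LQ : (L <= Qdiag)%MS by rewrite /L /clusterL -mulmx_Qdiag submxMl.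
have [_ <-] := mxrank_leqif_sup LQ.
by rewrite rankL (eqP row_free_Qdiag) sum_nat_const card_ord.
Qed.

Lemma row_free_Q i : row_free (Q i).
Proof.
apply/inj_row_free => v vQ0.
pose w := \mxrow_(j < n) (if j == i then conform_mx 0 v else 0 : 'rV_k).
have /eqP : w *m Qdiag = 0.
  rewrite mulmx_Qdiag -(mxrow0 (q_ := nn)); apply: eq_mxrow => j.
  by case: eqVneq => [->|_]; rewrite ?conform_mx_id ?vQ0 ?mul0mx.
rewrite mulmx_free_eq0 ?row_free_Qdiag // => /eqP/(congr1 (fun A => submxrow A i)).
by rewrite mxrowK eqxx conform_mx_id => ->; apply/matrixP => a b; rewrite !mxE.
Qed.

Lemma mu_v_clusterL :
  mu_v L = N2%:R / (n * k)%:R * \big[Num.max/0]_(b < N2) Pdiag b b.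
Proof.
rewrite -rankL; apply: mu_v_projector.
- exact: submx_trans Pdiag_sub_Qdiag Qdiag_sub.
- rewrite /L /clusterL /Pdiag mul_mxrow_mxdiag; apply: eq_mxrow => i.
  by rewrite -mulmxA mulmx_rowproj ?row_free_Q.
- by rewrite tr_mxdiag; apply: eq_mxdiag => i; rewrite trmx_rowproj.
Qed.

Lemma mu_v_clusterL_ge i : (0 < k)%N -> (0 < n)%N -> (0 < nn i)%N ->
  N2%:R / (n%:R * (nn i)%:R) <= mu_v L.
Proof.
move=> k_gt0 n_gt0 nn_gt0; rewrite mu_v_clusterL.
set mx := \big[Num.max/0]_(b < N2) Pdiag b b.
have tr_le : k%:R <= (nn i)%:R * mx.
  have -> : (nn i)%:R * mx = \sum_(j < nn i) mx by rewrite sumr_const card_ord mulr_natl.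
  rewrite -(mxtrace_rowproj (row_free_Q i)).
  apply: ler_sum => j _; rewrite /mx (bigD1 (Rank i j)) //= le_max.
  suff -> : Pdiag (Rank i j) (Rank i j) = rowproj (Q i) j j by rewrite lexx.
  by have /matrixP/(_ j j) := submxblock_diag (fun i => rowproj (Q i)) i; rewrite !mxE.
have nn0 : 0 < (nn i)%:R :> R by rewrite ltr0n.
have -> : N2%:R / (n%:R * (nn i)%:R) = N2%:R / (n * k)%:R * (k%:R / (nn i)%:R) :> R.
  by rewrite natrM; field; rewrite !pnatr_eq0 -!lt0n k_gt0 n_gt0 nn_gt0.
by rewrite ler_wpM2l ?divr_ge0 // ler_pdivrMr // mulrC.
Qed.

Lemma mu_v_clusterL_gt : (0 < n)%N -> (0 < k)%N -> (forall i, 0 < nn i)%N ->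
  n%:R^-1 * (1/2 * N2%:R / (\big[minn/N2]_(i < n) nn i)%:R) < mu_v L.
Proof.
move=> n_gt0 k_gt0 nn_gt0.
have [i0 _ ->] : {i0 | i0 \in 'I_n & \big[minn/N2]_(i < n) nn i = nn i0}.
  by apply: (eq_bigmin (Ordinal n_gt0)) => // i _; rewrite leEnat /N2 (bigD1 i) //= leq_addr.
apply: lt_le_trans (mu_v_clusterL_ge k_gt0 n_gt0 (nn_gt0 i0)).
have a_gt0 : 0 < N2%:R / (n%:R * (nn i0)%:R) :> R.
  by rewrite divr_gt0 ?mulr_gt0 ?ltr0n ?nn_gt0 // /N2 (bigD1 i0) //= ltn_addr.
rewrite (_ : _ * _ = N2%:R / (n%:R * (nn i0)%:R) / 2); first lra.
by field; rewrite !pnatr_eq0 -!lt0n n_gt0 nn_gt0.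
Qed.

End ClusterProjector.

Section RowSubBasis.
Variable R : realType.

(* [invmx] is the identity on singular matrices, hence the determinant test. *)
Definition rowsub_basis m N r (L : 'M[R]_(m, N)) (f : 'I_r -> 'I_m) : bool :=
  (\det (rowsub f L *m (rowsub f L)^T) != 0) && (L *m rowproj (rowsub f L) == L).

Lemma rowsub_basisP m N r (L : 'M[R]_(m, N)) (f : 'I_r -> 'I_m) :
  rowsub_basis L f -> row_free (rowsub f L) /\ (rowsub f L == L)%MS.
Proof.
set X := rowsub f L => /andP[XX0 /eqP LP].
have fX : row_free X.
  have /eqP rkXX : row_free (X *m X^T) by rewrite row_free_unit unitmxE unitfE.
  by rewrite /row_free eqn_leq rank_leq_row /= -{1}rkXX mxrankM_maxl.
split => //; rewrite /eqmx rowsub_sub -LP.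
exact: submx_trans (submxMl _ _) (rowproj_sub X).
Qed.

Lemma rowsub_basis_rank m N r (L : 'M[R]_(m, N)) (f : 'I_r -> 'I_m) :
  rowsub_basis L f -> \rank L = r.
Proof. by case/rowsub_basisP => fX eXL; rewrite -(eqmxP eXL); exact/eqP. Qed.

Lemma rowsub_basis_exists m N (L : 'M[R]_(m, N)) :
  exists r : 'I_m.+1, exists f : {ffun 'I_r -> 'I_m}, rowsub_basis L f.
Proof.
have rk_lt : (\rank L < m.+1)%N by rewrite ltnS rank_leq_row.
exists (Ordinal rk_lt), [ffun i => maxrankfun L i].
have -> : rowsub_basis L [ffun i => maxrankfun L i] = rowsub_basis L (maxrankfun L).
  by congr rowsub_basis; apply/funext => i; rewrite ffunE.
set X := rowsub (maxrankfun L) L; have fX : row_free X := maxrowsub_free L.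
rewrite /rowsub_basis -/X -unitfE -unitmxE row_free_gram_unit //=.
have /submxP[D eL] : (L <= X)%MS by rewrite (eq_maxrowsub L).
apply/eqP; transitivity (D *m X *m rowproj X); first by congr (_ *m _).
by rewrite -mulmxA mulmx_rowproj.
Qed.

End RowSubBasis.

Local Open Scope classical_set_scope.

Lemma measurable_inv (R : realType) : measurable_fun setT (@GRing.inv R).
Proof.
have -> : (@GRing.inv R) = (fun x => if x == 0 then 0 else x^-1).
  by apply/funext => x; case: eqP => // ->; rewrite invr0.
apply: measurable_fun_if => //.
  by apply: measurable_fun_eqr; [exact: measurable_id | exact: measurable_cst].
rewrite (_ : _ `&` _ = ~` [set 0]); last first.
  by apply/seteqP; split => x /=; [move=> [_ /negbT/eqP] | move=> /eqP/negPf ->].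
apply: open_continuous_measurable_fun; first exact/closed_openC/closed_eq.
by move=> x; rewrite inE /= => /eqP x0; exact: inv_continuous.
Qed.

Section RandomMatrix.
Context d (T : measurableType d) (R : realType).

Lemma rand_mx_mul a b c (F : T -> 'M[R]_(a, b)) (G : T -> 'M[R]_(b, c)) :
  rand_mx F -> rand_mx G -> rand_mx (fun w => F w *m G w).
Proof.
move=> mF mG i j; apply: (eq_measurable_fun (fun w => \sum_l F w i l * G w l j)).
  by move=> w _; rewrite mxE.
by apply: measurable_sum => l; apply: measurable_funM.
Qed.

Lemma rand_mx_tr a b (F : T -> 'M[R]_(a, b)) :
  rand_mx F -> rand_mx (fun w => (F w)^T).
Proof.
by move=> mF i j; apply: (eq_measurable_fun (fun w => F w j i)) (mF j i) => w _; rewrite mxE.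
Qed.

Lemma rand_mx_rowsub a b c (f : 'I_c -> 'I_a) (F : T -> 'M[R]_(a, b)) :
  rand_mx F -> rand_mx (fun w => rowsub f (F w)).
Proof.
by move=> mF i j; apply: (eq_measurable_fun (fun w => F w (f i) j)) (mF _ j) => w _; rewrite mxE.
Qed.

Lemma measurable_det n (F : T -> 'M[R]_n) :
  rand_mx F -> measurable_fun setT (fun w => \det (F w)).
Proof.
move=> mF; apply: measurable_sum => s; apply: measurable_funM.
  exact: measurable_cst.
by apply: measurable_prod => i _; exact: mF.
Qed.

Lemma rand_mx_adj n (F : T -> 'M[R]_n) : rand_mx F -> rand_mx (fun w => \adj (F w)).
Proof.
move=> mF i j.
apply: (eq_measurable_fun (fun w => (-1) ^+ (j + i) * \det (row' j (col' i (F w))))).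
  by move=> w _; rewrite mxE.
apply: measurable_funM; first exact: measurable_cst.
apply: measurable_det => a b.
by apply: (eq_measurable_fun (fun w => F w (lift j a) (lift i b))) (mF _ _) => w _; rewrite !mxE.
Qed.

Lemma rand_mx_invmx n (F : T -> 'M[R]_n) : rand_mx F -> rand_mx (fun w => invmx (F w)).
Proof.
move=> mF i j.
have -> : (fun w => invmx (F w) i j) = fun w =>
    if \det (F w) != 0 then (\det (F w))^-1 * \adj (F w) i j else F w i j.
  by apply/funext => w; rewrite /invmx unitmxE unitfE; case: ifP; rewrite ?mxE.
apply: measurable_fun_ifT; last exact: mF.
  apply: measurable_neg; apply: measurable_fun_eqr; last exact: measurable_cst.
  exact: measurable_det.
apply: measurable_funM; last exact: rand_mx_adj.
exact: measurableT_comp (@measurable_inv R) (measurable_det mF).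
Qed.

Lemma rand_mx_rowproj a b (F : T -> 'M[R]_(a, b)) :
  rand_mx F -> rand_mx (fun w => rowproj (F w)).
Proof.
move=> mF; have mFt := rand_mx_tr mF.
exact: rand_mx_mul (rand_mx_mul mFt (rand_mx_invmx (rand_mx_mul mF mFt))) mF.
Qed.

Lemma measurable_event (p : T -> bool) : measurable_fun setT p -> measurable [set w | p w].
Proof. by move=> mp; rewrite -[X in measurable X]setTI; exact: mp. Qed.

Lemma measurable_bigmaxr (I : Type) (s : seq I) (h : I -> T -> R) :
  (forall i, measurable_fun setT (h i)) ->
  measurable_fun setT (fun w => \big[Num.max/0]_(i <- s) h i w).
Proof.
move=> mh; elim: s => [|i s IHs].
  by under eq_fun => w do rewrite big_nil; exact: measurable_cst.
by under eq_fun => w do rewrite big_cons; exact: measurable_maxr.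
Qed.

Lemma measurable_fun_bigand (I : Type) (s : seq I) (p : I -> T -> bool) :
  (forall i, measurable_fun setT (p i)) ->
  measurable_fun setT (fun w => \big[andb/true]_(i <- s) p i w).
Proof.
move=> mp; elim: s => [|i s IHs].
  by under eq_fun => w do rewrite big_nil; exact: measurable_cst.
by under eq_fun => w do rewrite big_cons; exact: measurable_and.
Qed.

Lemma measurable_fun_eqmx a b (F G : T -> 'M[R]_(a, b)) :
  rand_mx F -> rand_mx G -> measurable_fun setT (fun w => F w == G w).
Proof.
move=> mF mG.
have -> : (fun w => F w == G w) = fun w =>
    \big[andb/true]_(ij : 'I_a * 'I_b) (F w ij.1 ij.2 == G w ij.1 ij.2).
  apply/funext => w; rewrite big_andE.
  apply/eqP/forallP => [-> ij|FG]; first by rewrite eqxx.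
  by apply/matrixP => i j; exact/eqP/(FG (i, j)).
by apply: measurable_fun_bigand => ij; exact: measurable_fun_eqr.
Qed.

Lemma measurable_fun_piecewise (I : finType) d' (V : measurableType d')
    (p : I -> T -> bool) (g : I -> T -> V) (f : T -> V) :
  (forall i, measurable_fun setT (p i)) -> (forall i, measurable_fun setT (g i)) ->
  (forall w, exists i, p i w) -> (forall i w, p i w -> f w = g i w) ->
  measurable_fun setT f.
Proof.
move=> mp mg p_cover fg _ B mB; rewrite setTI.
have -> : f @^-1` B = \bigcup_(i in setT) ([set w | p i w] `&` (g i @^-1` B)).
  apply/seteqP; split => [w Bfw|w [i _ [piw Bgw]]] /=.
    by have [i piw] := p_cover w; exists i => //; split; rewrite //= -(fg i w piw).
  by rewrite (fg i w piw).
apply: fin_bigcup_measurable => [|i _]; first exact: finite_finset.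
apply: measurableI; first exact: measurable_event.
by rewrite -[X in measurable X]setTI; exact: mg.
Qed.

Lemma measurable_fun_rowsub_basis m N r (f : 'I_r -> 'I_m) (X : T -> 'M[R]_(m, N)) :
  rand_mx X -> measurable_fun setT (fun w => rowsub_basis (X w) f).
Proof.
move=> mX; have mXf := rand_mx_rowsub f mX.
apply: measurable_and.
  apply: measurable_neg; apply: measurable_fun_eqr; last exact: measurable_cst.
  exact/measurable_det/rand_mx_mul/rand_mx_tr.
exact/measurable_fun_eqmx/mX/rand_mx_mul/rand_mx_rowproj.
Qed.

Lemma measurable_mu_v m N (X : T -> 'M[R]_(m, N)) :
  rand_mx X -> measurable_fun setT (fun w => mu_v (X w)).
Proof.
move=> mX; apply: (@measurable_fun_piecewise {r : 'I_m.+1 & {ffun 'I_r -> 'I_m}} _ R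
  (fun rf w => rowsub_basis (X w) (tagged rf))
  (fun rf w => N%:R / (tag rf)%:R *
     \big[Num.max/0]_(b < N) rowproj (rowsub (tagged rf) (X w)) b b)).
- by move=> rf; exact: measurable_fun_rowsub_basis.
- move=> rf; apply: measurable_funM; first exact: measurable_cst.
  by apply: measurable_bigmaxr => b; exact/rand_mx_rowproj/rand_mx_rowsub.
- by move=> w; have [r [f Lf]] := rowsub_basis_exists (X w); exists (existT _ r f).
move=> [r f] w /= Xf; have [fX eXL] := rowsub_basisP Xf.
by rewrite (mu_v_rowproj fX eXL) (rowsub_basis_rank Xf).
Qed.

Lemma measurable_rank m N (X : T -> 'M[R]_(m, N)) :
  rand_mx X -> measurable_fun setT (fun w => \rank (X w)).
Proof.
move=> mX; apply: (@measurable_fun_piecewise {r : 'I_m.+1 & {ffun 'I_r -> 'I_m}} _ nat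
  (fun rf w => rowsub_basis (X w) (tagged rf)) (fun rf _ => tag rf)).
- by move=> rf; exact: measurable_fun_rowsub_basis.
- by move=> rf; exact: measurable_cst.
- by move=> w; have [r [f Lf]] := rowsub_basis_exists (X w); exists (existT _ r f).
by move=> [r f] w /= /rowsub_basis_rank ->.
Qed.

Lemma rand_mx_clusterL N1 n k (nn : 'I_n -> nat) (U : 'I_n -> T -> 'M[R]_(N1, k))
    (Q : forall i, T -> 'M[R]_(k, nn i)) :
  (forall i, rand_mx (U i)) -> (forall i, rand_mx (Q i)) ->
  rand_mx (fun w => clusterL (fun i => U i w) (fun i => Q i w)).
Proof.
move=> mU mQ a b.
apply: (eq_measurable_fun (fun w => (U (tagnat.sig1 b) w *m Q _ w) a (tagnat.sig2 b))).
  by move=> w _; rewrite /clusterL /mxrow [RHS]mxE.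
exact: rand_mx_mul.
Qed.

End RandomMatrix.

Theorem lemma2 (R : realType) (d : measure_display) (T : measurableType d)
  (P : probability T R) (N1 n k : nat) (nn : 'I_n -> nat)
  (U : 'I_n -> T -> 'M[R]_(N1, k)) (Q : forall i : 'I_n, T -> 'M[R]_(k, nn i))
  (n_gt0 : (0 < n)%N) (k_gt0 : (0 < k)%N) (nn_gt0 : forall i, (0 < nn i)%N)
  (U_meas : forall i, rand_mx (U i)) (Q_meas : forall i, rand_mx (Q i))
  (U_unif : forall i, unif_rowspace P (fun w => (U i w)^T))
  (Q_unif : forall i, unif_rowspace P (Q i))
  (UQ_indep : indep_mx P (UQfam U Q))
  (rankL : P [set w | \rank (clusterL (fun i => U i w) (fun i => Q i w)) != (n * k)%N]
           = 0%E)
  (hk : (18 : R) * ln ((\max_(i < n) nn i)%N)%:R <= k%:R)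
  (hni : forall i, (96 : R) * k%:R * ln (nn i)%:R <= (nn i)%:R) :
  (P [set w | (mu_v (clusterL (fun i => U i w) (fun i => Q i w)) <
             (n%:R : R)^-1 * (1/2 * (\sum_(i < n) nn i)%:R /
                        (\big[minn/(\sum_(i < n) nn i)%N]_(i < n) nn i)%:R))%R]
   <= ((2 : R) * \sum_(i < n) ((nn i)%:R ^- 5))%R%:E)%E.
Proof.
pose L w := clusterL (fun i => U i w) (fun i => Q i w).
set c := (n%:R : R)^-1 * _.
have mL : rand_mx L := rand_mx_clusterL U_meas Q_meas.
have mE : measurable [set w | mu_v (L w) < c].
  apply: measurable_event; apply: measurable_fun_ltr; last exact: measurable_cst.
  exact: measurable_mu_v.
have mA : measurable [set w | \rank (L w) != (n * k)%N].
  have -> : [set w | \rank (L w) != (n * k)%N] = (fun w => \rank (L w)) @^-1` [set~ (n * k)%N].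
    by apply/seteqP; split => w /= /eqP.
  by rewrite -[X in measurable X]setTI; exact: measurable_rank.
have EA : [set w | mu_v (L w) < c] `<=` [set w | \rank (L w) != (n * k)%N].
  move=> w /= muc; apply/eqP => /mu_v_clusterL_gt/(_ n_gt0 k_gt0 nn_gt0).
  by rewrite ltNge (ltW muc).
apply: (@le_trans _ _ (P [set w | \rank (L w) != (n * k)%N])).
  exact: le_measure (mem_set mE) (mem_set mA) EA.
rewrite rankL lee_fin.
by rewrite mulr_ge0 // sumr_ge0 // => i _; rewrite invr_ge0 exprn_ge0.
Qed.
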